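(* Let $G$ be hyperbolic relative to $P_1,\dots,P_s$, and let $T_{\rm thick}\subset T$ be as in the context. Let $u,v$ be distinct non-parabolic points lying in the same connected component of $\partial G$. Then there exists $w\in\partial G$ such that $(u,v,w)\in T_{\rm thick}$.
   Context: Relative hyperbolicity is in the sense of Bowditch; $\partial G$ is the Bowditch boundary, a compact Hausdorff space on which $G$ acts as a convergence group; parabolic points are the fixed points of conjugates of the $P_i$. $T=\{(x,y,z)\in(\partial G)^3:x\neq y\neq z\neq x\}$ is triple space with the diagonal $G$-action. $T\cup\partial G$ is topologized so that a sequence $(u_i,v_i,w_i)$ in $T$ converges to $x\in\partial G$ iff at least two of the sequences $(u_i),(v_i),(w_i)$ converge to $x$. Let $p_1,\dots,p_s$ be representatives of the $G$-orbits of parabolic points with $P_i=\mathrm{Stab}_G(p_i)$. A cusp neighborhood of $p_i$ is a subset $T-\mathrm{Stab}_G(p_i)K$, where $K$ is a compact subset of $T\cup\partial G$ containing an open neighborhood of some compact $C\subset\partial G-\{p_i\}$ with $\mathrm{Stab}_G(p_i)C=\partial G-\{p_i\}$. Open cusp neighborhoods $B_i$ of $p_i$ ($i=1,\dots,s$) are chosen so that the sets $gB_i$ ($g\in G/P_i$, $i=1,\dots,s$) are pairwise disjoint and $T_{\rm thick}:=T-\bigcup_{i=1}^s\bigcup_{g\in G}gB_i$ projects onto a compact subspace of $G\backslash T$. *)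

From HB Require Import structures.
From mathcomp Require Import all_boot all_order all_algebra.
From mathcomp Require Import all_classical all_reals all_analysis.
From Stdlib Require Import List.

Set Implicit Arguments.
Unset Strict Implicit.
Unset Printing Implicit Defensive.

Import Order.TTheory GRing.Theory Num.Theory.
Local Open Scope classical_set_scope.

Section RelHyp.

Context (G : Type) (mul : G -> G -> G) (one : G) (inv : G -> G).

Definition is_group : Prop :=
  (forall a b c, mul a (mul b c) = mul (mul a b) c) /\
  (forall a, mul one a = a /\ mul a one = a) /\
  (forall a, mul (inv a) a = one /\ mul a (inv a) = one).

Fixpoint gpow (g : G) (n : nat) : G :=
  match n with O => one | S n' => mul g (gpow g n') end.

Definition infinite_order (g : G) : Prop :=
  forall n : nat, (0 < n)%N -> gpow g n <> one.

Definition is_subgroup (H : set G) : Prop :=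
  H one /\ (forall a b, H a -> H b -> H (mul a b)) /\ (forall a, H a -> H (inv a)).

Context (X : topologicalType) (act : G -> X -> X).

Definition is_continuous_action : Prop :=
  (forall x, act one x = x) /\
  (forall g h x, act (mul g h) x = act g (act h x)) /\
  (forall g, continuous (act g)).

Definition triple_space : set (X * X * X) :=
  [set t | t.1.1 <> t.1.2 /\ t.1.2 <> t.2 /\ t.2 <> t.1.1].

Definition act3 (g : G) (t : X * X * X) : X * X * X :=
  (act g t.1.1, act g t.1.2, act g t.2).

Definition convergence_action : Prop :=
  forall K : set (X * X * X), compact K -> K `<=` triple_space ->
    finite_set [set g | exists2 t, K t & K (act3 g t)].

Definition stab (p : X) : set G := [set g | act g p = p].

Definition loxodromic (g : G) : Prop :=
  infinite_order g /\
  exists a b : X, a <> b /\ forall x, act g x = x <-> (x = a \/ x = b).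

Definition parabolic_point (p : X) : Prop :=
  exists H : set G, [/\ is_subgroup H, infinite_set H, H `<=` stab p &
                        forall g, H g -> ~ loxodromic g].

Definition conical_point (x : X) : Prop :=
  exists (gs : nat -> G) (a b : X), a <> b /\
    (act (gs n) x @[n --> \oo] --> a) /\
    (forall y, y <> x -> act (gs n) y @[n --> \oo] --> b).

Definition bounded_parabolic (p : X) : Prop :=
  parabolic_point p /\
  exists C : set X, compact C /\ C `<=` [set x | x <> p] /\
    [set x | exists g c, [/\ stab p g, C c & x = act g c]] = [set x | x <> p].

(* G is hyperbolic relative to P_1..P_s in the sense of Bowditch, with
   Bowditch boundary X (geometrically finite convergence action),
   p_i orbit representatives of parabolic points, P_i = Stab(p_i). *)
Definition bowditch_rel_hyp (s : nat) (P : 'I_s -> set G) (p : 'I_s -> X) : Prop :=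
  is_group /\ is_continuous_action /\ hausdorff_space X /\ compact [set: X] /\
  ((exists x : X, True) /\ forall x : X, ~ open [set x]) /\
  convergence_action /\
  (forall x, conical_point x \/ bounded_parabolic x) /\
  (forall i, bounded_parabolic (p i) /\ P i = stab (p i)) /\
  (forall i j g, act g (p i) = p j -> i = j) /\
  (forall x, parabolic_point x -> exists i g, x = act g (p i)).

(* topology on T u dG, realized on the sum type (X*X*X) + X *)
Definition two_in (U : set X) (t : X * X * X) : Prop :=
  (U t.1.1 /\ U t.1.2) \/ (U t.1.2 /\ U t.2) \/ (U t.2 /\ U t.1.1).

Definition TX : set ((X * X * X) + X) :=
  fun z => match z with inl t => triple_space t | inr _ => True end.

Definition open_T (O : set (X * X * X)) : Prop :=
  exists2 V : set (X * X * X), open V & O = V `&` triple_space.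

Definition open_TX (O : set ((X * X * X) + X)) : Prop :=
  O `<=` TX /\ open_T [set t | O (inl t)] /\
  forall x, O (inr x) -> exists U : set X,
    [/\ open U, U x, (forall y, U y -> O (inr y)) &
        (forall t, triple_space t -> two_in U t -> O (inl t))].

Definition compact_TX (K : set ((X * X * X) + X)) : Prop :=
  K `<=` TX /\
  forall (I : Type) (F : I -> set ((X * X * X) + X)),
    (forall i, open_TX (F i)) -> (forall k, K k -> exists i, F i k) ->
    exists l : list I, forall k, K k -> exists i, List.In i l /\ F i k.

Definition actTX (g : G) (z : (X * X * X) + X) : (X * X * X) + X :=
  match z with inl t => inl (act3 g t) | inr x => inr (act g x) end.

Definition cusp_nbhd (p0 : X) (B : set (X * X * X)) : Prop :=
  exists (K : set ((X * X * X) + X)) (C : set X),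
    compact_TX K /\ compact C /\ C `<=` [set x | x <> p0] /\
    [/\ [set x | exists g c, [/\ stab p0 g, C c & x = act g c]] = [set x | x <> p0],
        (exists O, [/\ open_TX O, (forall c, C c -> O (inr c)) & O `<=` K]) &
        B = [set t | triple_space t /\
                     ~ exists g k, [/\ stab p0 g, K k & inl t = actTX g k]]].

Definition translate (g : G) (B : set (X * X * X)) : set (X * X * X) :=
  [set t | exists2 t', B t' & t = act3 g t'].

Definition thick_part (s : nat) (B : 'I_s -> set (X * X * X)) : set (X * X * X) :=
  [set t | triple_space t /\ forall i g, ~ translate g (B i) t].

(* the image of S in the quotient G\T (quotient topology) is compact:
   open sets of G\T correspond to G-invariant open subsets of T *)
Definition compact_mod_G (S : set (X * X * X)) : Prop :=
  forall (I : Type) (F : I -> set (X * X * X)),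
    (forall i, open_T (F i) /\ forall g t, F i t -> F i (act3 g t)) ->
    (forall t, S t -> exists i, F i t) ->
    exists l : list I, forall t, S t -> exists i, List.In i l /\ F i t.

End RelHyp.

From HB Require Import structures.
From mathcomp Require Import all_boot all_order all_algebra.
From mathcomp Require Import all_classical all_reals all_analysis.
Local Open Scope classical_set_scope.

(* Suppose no w completes (u, v) to a thick triple.  Then every w outside
   {u, v} lies in a slice {w | (u, v, w) in g B_i}.  These slices are open,
   two of them are disjoint or nested (the translates of the B_i form a
   disjoint family and B_i is Stab(p_i)-invariant), and since u, v are not
   parabolic, g^-1 u and g^-1 v are not p_i, so a cusp neighbourhood of p_i
   keeps the slice of g B_i away from neighbourhoods of u and v.  The slice
   through a third point of the component of u and v is therefore relatively
   clopen in that component, hence contains u: a contradiction. *)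

Set Implicit Arguments.
Unset Strict Implicit.

Lemma pair_cst_continuous (X Y Z : topologicalType) (c : Z) (f : X -> Y) :
  continuous f -> continuous (fun x => (c, f x)).
Proof. by move=> fc x; apply: cvg_pair; [exact: cvg_cst | exact: fc]. Qed.

Lemma connected_third_point (X : topologicalType) (Y : set X) (u v : X) :
  accessible_space X -> connected Y -> Y u -> Y v -> u <> v ->
  exists w, [/\ Y w, w <> u & w <> v].
Proof.
move=> acc Yc Yu Yv uv; apply: contrapT => nothird.
have Yu1 : [set u] = Y.
  apply: Yc; first by exists u.
  - exists (~` [set v]); first exact/closed_openC/accessible_closed_set1.
    apply/seteqP; split=> [x -> | x [Yx xv]]; first by split=> // vu; apply: uv.
    by apply: contrapT => xu; apply: nothird; exists x.
  - exists [set u]; first exact: accessible_closed_set1.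
    by apply/seteqP; split=> [x -> | x []].
by apply: uv; have : [set u] v by rewrite Yu1.
Qed.

(* [Y `&` W i] is relatively clopen in [Y]: its complement in [Y] is cut out
   by the open set [N] and the blocks disjoint from [W i]. *)
Lemma connected_sub_block (X : topologicalType) (I : Type) (W : I -> set X)
    (N Y : set X) (i : I) :
  connected Y -> open N -> (forall j, open (W j)) -> N `&` W i = set0 ->
  (forall j, W j `&` W i !=set0 -> W j `<=` W i) ->
  Y `<=` N `|` \bigcup_j W j -> Y `&` W i !=set0 -> Y `<=` W i.
Proof.
move=> Yc oN oW NWi nested Ycov YWi.
set D := \bigcup_(j in [set j | W j `&` W i = set0]) W j.
suff <- : Y `&` W i = Y by move=> x [].
apply: Yc => //; first by exists (W i).
exists (~` (N `|` D)).
  by apply/open_closedC/openU => //; apply: bigcup_open.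
apply/seteqP; split=> [x [Yx Wix] | x [Yx NDx]]; split=> //.
  case=> [Nx | [j /= WjWi Wjx]].
    by have : (N `&` W i) x by []; rewrite NWi.
  by have : (W j `&` W i) x by []; rewrite WjWi.
have [Nx | [j _ Wjx]] := Ycov x Yx; first by case: NDx; left.
have [meet | disj] := pselect (W j `&` W i !=set0); first exact: nested meet _ Wjx.
case: NDx; right; exists j => //=.
by apply/seteqP; split=> // y Wy; apply: disj; exists y.
Qed.

Section GroupAction.
Variables (G : Type) (mul : G -> G -> G) (one : G) (inv : G -> G).
Variables (X : topologicalType) (act : G -> X -> X).
Hypotheses (grp : is_group mul one inv) (actc : is_continuous_action mul one act).

Lemma mulA a b c : mul a (mul b c) = mul (mul a b) c.
Proof. by case: grp. Qed.

Lemma mul1g a : mul one a = a.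
Proof. by case: grp => _ [/(_ a) []]. Qed.

Lemma mulg1 a : mul a one = a.
Proof. by case: grp => _ [/(_ a) []]. Qed.

Lemma mulVg a : mul (inv a) a = one.
Proof. by case: grp => _ [_ /(_ a) []]. Qed.

Lemma mulgV a : mul a (inv a) = one.
Proof. by case: grp => _ [_ /(_ a) []]. Qed.

Lemma mulgK a b : mul (mul a b) (inv b) = a.
Proof. by rewrite -mulA mulgV mulg1. Qed.

Lemma mulgKV a b : mul (mul a (inv b)) b = a.
Proof. by rewrite -mulA mulVg mulg1. Qed.

Lemma inv_uniq a b : mul a b = one -> b = inv a.
Proof. by move=> ab1; rewrite -(mul1g b) -(mulVg a) -mulA ab1 mulg1. Qed.

Lemma act1 x : act one x = x.
Proof. by case: actc. Qed.

Lemma actM g h x : act (mul g h) x = act g (act h x).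
Proof. by case: actc => _ []. Qed.

Lemma actTXM g h z : actTX act (mul g h) z = actTX act g (actTX act h z).
Proof. by case: z => [[[x y] z]|x]; rewrite /= /act3 /= ?actM. Qed.

Lemma act_continuous g : continuous (act g).
Proof. by case: actc => _ []. Qed.

Lemma actVK g x : act (inv g) (act g x) = x.
Proof. by rewrite -actM mulVg act1. Qed.

Lemma actKV g x : act g (act (inv g) x) = x.
Proof. by rewrite -actM mulgV act1. Qed.

Lemma act_inj g x y : act g x = act g y -> x = y.
Proof. by move=> e; rewrite -(actVK g x) e actVK. Qed.

Lemma open_preimage_act g (U : set X) : open U -> open (act g @^-1` U).
Proof. by move=> oU; apply: open_comp => // x _; exact: act_continuous. Qed.

Lemma triple_space_act g t : triple_space t -> triple_space (act3 act g t).
Proof.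
by case: t => [[x y] z] [/= xy [yz zx]]; split=> [|/=]; [|split]; move/act_inj.
Qed.

Lemma translateE g (B : set (X * X * X)) t :
  translate act g B t <-> B (act3 act (inv g) t).
Proof.
split=> [[[[x y] z] Bt' ->] | Bt]; first by rewrite /act3 /= !actVK.
exists (act3 act (inv g) t) => //.
by case: t Bt => [[x y] z] _; rewrite /act3 /= !actKV.
Qed.

Definition cj g k := mul (mul (inv g) k) g.

Lemma cjM g a b : cj g (mul a b) = mul (cj g a) (cj g b).
Proof. by rewrite /cj !mulA mulgK. Qed.

Lemma cj1 g : cj g one = one.
Proof. by rewrite /cj mulg1 mulVg. Qed.

Lemma cjV g a : cj g (inv a) = inv (cj g a).
Proof. by apply: inv_uniq; rewrite -cjM mulgV cj1. Qed.

Lemma cjX g k n : gpow mul one (cj g k) n = cj g (gpow mul one k n).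
Proof. by elim: n => [|n IHn] /=; rewrite ?cj1 // IHn -cjM. Qed.

Lemma cj_inj g a b : cj g a = cj g b -> a = b.
Proof.
move=> e; have : mul g (mul (cj g a) (inv g)) = mul g (mul (cj g b) (inv g)).
  by rewrite e.
by rewrite /cj !mulA !mulgK !mulgV !mul1g.
Qed.

Lemma cjK g h : cj g (mul (mul g h) (inv g)) = h.
Proof. by rewrite /cj !mulA mulVg mul1g mulgKV. Qed.

Lemma act_cj g k x : act (cj g k) x = act (inv g) (act k (act g x)).
Proof. by rewrite /cj !actM. Qed.

Lemma loxodromic_cj g k :
  loxodromic mul one act k -> loxodromic mul one act (cj g k).
Proof.
case=> kinf [a [b [ab fixk]]]; split.
  move=> n n0; rewrite cjX => e; apply: (kinf n n0).
  by apply: (@cj_inj g); rewrite e cj1.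
exists (act (inv g) a), (act (inv g) b); split; first by move/act_inj.
move=> x; rewrite act_cj; split=> [e | fx].
  have /fixk[<-|<-] : act k (act g x) = act g x by rewrite -{2}e actKV.
    by left; rewrite actVK.
  by right; rewrite actVK.
have -> : act k (act g x) = act g x.
  by apply/fixk; case: fx => ->; [left | right]; rewrite actKV.
by rewrite actVK.
Qed.

Lemma parabolic_point_act g p :
  parabolic_point mul one inv act p -> parabolic_point mul one inv act (act g p).
Proof.
case=> H [[H1 [HM HV]] Hinf Hstab Hlox].
exists [set k | H (cj g k)]; split.
- split; first by rewrite /= cj1.
  split=> [a b /= Ha Hb | a /= Ha]; first by rewrite cjM; exact: HM.
  by rewrite cjV; exact: HV.
- move=> fin; apply: Hinf.
  apply: (sub_finite_set _ (finite_image (cj g) fin)) => h Hh.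
  by exists (mul (mul g h) (inv g)); rewrite /= cjK.
- by move=> k /= /Hstab; rewrite /stab /= act_cj => e; rewrite -{2}e actKV.
- by move=> k /= Hk /(loxodromic_cj g); exact: Hlox.
Qed.

Lemma cusp_nbhd_sep p0 B0 y : cusp_nbhd act p0 B0 -> y <> p0 ->
  exists U, [/\ open U, U y & forall t, B0 t -> ~ two_in U t].
Proof.
case=> K [C [_ [_ [_ [Ccov [V [[_ [_ Vloc]] VC VK]] ->]]]]] yp.
(* y = h c with c in C; a neighbourhood U of c whose two-point triples lie in
   V, inside K, is moved by h to a neighbourhood of y avoiding B0. *)
have : [set x | exists g c, [/\ stab act p0 g, C c & x = act g c]] y by rewrite Ccov.
case=> h [c [hp Cc ->]].
have [U [oU Uc _ Vtwo]] := Vloc c (VC c Cc).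
exists (act (inv h) @^-1` U); split; first exact: open_preimage_act.
  by rewrite /= actVK.
move=> t [tt Kt] two; apply: Kt; exists h, (inl (act3 act (inv h) t)); split=> //.
  apply/VK/Vtwo; first exact: triple_space_act.
  by case: t {tt} two => [[x1 x2] x3].
by case: t {tt two} => [[x1 x2] x3]; rewrite /= /act3 /= !actKV.
Qed.

Lemma cusp_nbhd_stab p0 B0 k t : cusp_nbhd act p0 B0 -> stab act p0 k -> B0 t ->
  B0 (act3 act k t).
Proof.
case=> K [C [_ [_ [_ [_ _ ->]]]]] kp [tt Kt]; split; first exact: triple_space_act.
case=> g [k' [gp Kk' e]]; apply: Kt.
exists (mul (inv k) g), k'; split => //.
  by rewrite /stab /= actM gp -{1}kp actVK.
by rewrite actTXM -e; case: t {tt e} => [[x y] z]; rewrite /= /act3 /= !actVK.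
Qed.

Lemma translate_sub_stab p0 B0 g h : cusp_nbhd act p0 B0 ->
  stab act p0 (mul (inv h) g) -> translate act h B0 `<=` translate act g B0.
Proof.
move=> cusp hg t /translateE Bt; apply/translateE.
have gh : stab act p0 (mul (inv g) h).
  by move: hg; rewrite /stab /= !actM => e; rewrite -{1}e actKV actVK.
have := cusp_nbhd_stab cusp gh Bt.
by case: t {Bt} => [[x y] z]; rewrite /act3 /= !actM !actKV.
Qed.

Definition slice g (B : set (X * X * X)) (u v : X) : set X :=
  [set w | translate act g B (u, v, w)].

Lemma open_slice g B u v : accessible_space X -> open_T B -> u <> v ->
  open (slice g B u v).
Proof.
move=> acc [V oV ->] uv.
set a := act (inv g) u; set b := act (inv g) v.
have -> : slice g (V `&` @triple_space X) u v =
    (fun w => (a, b, act (inv g) w)) @^-1` V `&`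
    act (inv g) @^-1` (~` [set a] `&` ~` [set b]).
  apply/seteqP; split=> x; rewrite /slice /= translateE /act3 /=.
    by case=> Vx [_ [bx xa]]; do !split=> //; move=> e; apply: bx.
  case=> Vx [xa bx]; do !split=> //; last by move=> e; apply: bx.
  by move/act_inj.
apply: openI.
  by apply: open_comp => // x _; apply/pair_cst_continuous/act_continuous.
by apply/open_preimage_act/openI; apply/closed_openC/accessible_closed_set1.
Qed.

Lemma actV_neq_parabolic g p x : parabolic_point mul one inv act p ->
  ~ parabolic_point mul one inv act x -> act (inv g) x <> p.
Proof.
by move=> pp xnp e; apply: xnp; rewrite -(actKV g x) e; exact: parabolic_point_act.
Qed.

Lemma slice_sep p0 B0 g u v : cusp_nbhd act p0 B0 ->
  act (inv g) u <> p0 -> act (inv g) v <> p0 ->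
  exists N, [/\ open N, N u, N v & N `&` slice g B0 u v = set0].
Proof.
move=> cusp up vp.
have [Uu [oUu Uuu sepu]] := cusp_nbhd_sep cusp up.
have [Uv [oUv Uvv sepv]] := cusp_nbhd_sep cusp vp.
exists (act (inv g) @^-1` Uu `|` act (inv g) @^-1` Uv); split=> /=.
- by apply: openU; exact: open_preimage_act.
- by left.
- by right.
apply/seteqP; split=> // w [Nw /translateE Bw].
by case: Nw => [Uw|Uw]; [apply: (sepu _ Bw) | apply: (sepv _ Bw)];
  rewrite /two_in /act3 /=; auto.
Qed.

End GroupAction.

Unset Implicit Arguments.

Theorem lemma6p6 (G : Type) (mul : G -> G -> G) (one : G) (inv : G -> G)
  (X : topologicalType) (act : G -> X -> X)
  (s : nat) (P : 'I_s -> set G) (p : 'I_s -> X)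
  (hyp : bowditch_rel_hyp mul one inv act P p)
  (B : 'I_s -> set (X * X * X))
  (hBopen : forall i, open_T (B i))
  (hBcusp : forall i, cusp_nbhd act (p i) (B i))
  (hdisj : forall i j g h,
     (exists t, translate act g (B i) t /\ translate act h (B j) t) ->
     i = j /\ P i (mul (inv g) h))
  (hthick : compact_mod_G act (thick_part act B))
  (u v : X) (huv : u <> v)
  (hu : ~ parabolic_point mul one inv act u)
  (hv : ~ parabolic_point mul one inv act v)
  (hcomp : connected_component [set: X] u v) :
  exists w : X, thick_part act B (u, v, w).
Proof.
case: hyp => grp [actc [/hausdorff_accessible acc [_ [_ [_ [_ [hp _]]]]]]].
apply: contrapT => nothick.
pose W (q : G * 'I_s) := slice act q.1 (B q.2) u v.
have W_cover w : w <> u -> w <> v -> exists q, W q w.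
  move=> wu wv; apply: contrapT => nocov; apply: nothick; exists w.
  split=> [|i g tr]; first by split=> //; split=> // /esym.
  by apply: nocov; exists (g, i).
case: hcomp => Y [Yu _ Yc] Yv.
have [w0 [Yw0 w0u w0v]] := connected_third_point acc Yc Yu Yv huv.
have [[g i] Ww0] := W_cover w0 w0u w0v.
have pi_par := (hp i).1.1.
have [N [oN Nu Nv NW]] : exists N, [/\ open N, N u, N v & N `&` W (g, i) = set0].
  exact: (slice_sep grp actc (hBcusp i) (actV_neq_parabolic grp actc pi_par hu)
                                         (actV_neq_parabolic grp actc pi_par hv)).
have nested j : W j `&` W (g, i) !=set0 -> W j `<=` W (g, i).
  case=> w [Wjw Ww]; have [<- Pj] := hdisj j.2 i j.1 g (ex_intro _ _ (conj Wjw Ww)).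
  have st : stab act (p j.2) (mul (inv j.1) g) by rewrite -(hp j.2).2.
  by move=> x; apply: (translate_sub_stab grp actc (hBcusp j.2) st).
have Ysub : Y `<=` W (g, i).
  have oW q : open (W q) by exact: (open_slice grp actc q.1 acc (hBopen q.2) huv).
  apply: (connected_sub_block (i := (g, i)) Yc oN oW NW nested); last by exists w0.
  move=> x _; have [-> | xu] := pselect (x = u); first by left.
  have [-> | xv] := pselect (x = v); first by left.
  by have [q Wqx] := W_cover x xu xv; right; exists q.
have NWu : (N `&` W (g, i)) u by split=> //; exact: Ysub.
by rewrite NW in NWu.
Qed.
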